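(* Let $G=(V(G),E(G),\ell)$ be an $n$-order node-labeled graph and $k\ge 2$. Then for all $t\ge 1$ there exist functions $g^{(0)},\dots,g^{(t)}\colon V(G)^k\to\mathbb{R}$, scalars $\beta_1,\dots,\beta_k$ and feed-forward networks $\mathsf{FFN}$ with $$g^{(s)}(\mathbf{u})=\mathsf{FFN}\Big(g^{(s-1)}(\mathbf{u})+\sum_{j\in[k]}\beta_j\sum_{w\in V(G)}g^{(s-1)}(\phi_j(\mathbf{u},w))\Big)\quad(1\le s\le t),$$ where $g^{(0)}$ is initialized consistently with the labels $\ell$ and the atomic types (i.e., $g^{(0)}(\mathbf{u})=g^{(0)}(\mathbf{v})\iff C^k_0(\mathbf{u})=C^k_0(\mathbf{v})$), such that for all $\mathbf{u},\mathbf{v}\in V(G)^k$, $$C^k_t(\mathbf{u})=C^k_t(\mathbf{v})\iff g^{(t)}(\mathbf{u})=g^{(t)}(\mathbf{v}).$$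
   Context: $\phi_j(\mathbf{v},w)=(v_1,\dots,v_{j-1},w,v_{j+1},\dots,v_k)$. $C^k_t$ is the $k$-WL coloring of $k$-tuples: $C^k_0(\mathbf{v})$ is determined by the atomic type of $\mathbf{v}$ (which pairs of entries are equal and which are adjacent) together with the labels $\ell(v_1),\dots,\ell(v_k)$, and $C^k_t(\mathbf{v})=\mathsf{RELABEL}\big(C^k_{t-1}(\mathbf{v}),(\{\!\{C^k_{t-1}(\phi_j(\mathbf{v},w))\mid w\in V(G)\}\!\})_{j=1}^k\big)$ with $\mathsf{RELABEL}$ injective into fresh natural numbers. $\mathsf{FFN}$ denotes a feed-forward (MLP) network. *)

From HB Require Import structures.
From mathcomp Require Import all_boot all_order all_algebra.
From mathcomp Require Import reals.
Set Implicit Arguments. Unset Strict Implicit. Unset Printing Implicit Defensive.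
Import Order.TTheory GRing.Theory Num.Theory.
Local Open Scope ring_scope.

Section KWL.
Variables (V : finType) (L : eqType) (adj : rel V) (lab : V -> L) (k : nat).

Definition ktuple := {ffun 'I_k -> V}.

Definition phi (j : 'I_k) (v : ktuple) (w : V) : ktuple :=
  [ffun i => if i == j then w else v i].

Definition atp_eq (u v : ktuple) : bool :=
  [forall i, forall j, ((u i == u j) == (v i == v j)) &&
                       (adj (u i) (u j) == adj (v i) (v j))]
  && [forall i, lab (u i) == lab (v i)].

(* Since RELABEL is injective,
   C_t(u) = C_t(v) iff C_{t-1}(u) = C_{t-1}(v) and, for every j, the
   multisets {{C_{t-1}(phi_j(u,w)) | w}} and {{C_{t-1}(phi_j(v,w)) | w}}
   coincide, i.e. every colour (= colour of some k-tuple x) occurs equally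
   often in both. *)
Fixpoint kwl_eq (t : nat) (u v : ktuple) : bool :=
  match t with
  | 0 => atp_eq u v
  | t'.+1 => kwl_eq t' u v &&
      [forall j : 'I_k, forall x : ktuple,
         #|[set w | kwl_eq t' (phi j u w) x]| ==
         #|[set w | kwl_eq t' (phi j v w) x]|]
  end.
End KWL.

Section FFN.
Variable R : realType.

Definition relu_v n (x : 'cV[R]_n) : 'cV[R]_n := map_mx (fun a => Num.max a 0) x.

Inductive mlp : nat -> nat -> Type :=
| mlp_affine : forall m n, 'M[R]_(n, m) -> 'cV[R]_n -> mlp m n
| mlp_layer : forall m h n, 'M[R]_(h, m) -> 'cV[R]_h -> mlp h n -> mlp m n.

Fixpoint mlp_eval m n (N : mlp m n) : 'cV[R]_m -> 'cV[R]_n :=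
  match N in mlp m n return 'cV[R]_m -> 'cV[R]_n with
  | mlp_affine _ _ W b => fun x => W *m x + b
  | mlp_layer _ _ _ W b N' => fun x => mlp_eval N' (relu_v (W *m x + b))
  end.

Definition FFN := mlp 1 1.
Definition ffn_eval (N : FFN) (a : R) : R := mlp_eval N (a%:M) 0 0.
End FFN.

From HB Require Import structures.
From mathcomp Require Import all_boot all_order all_algebra.
From mathcomp Require Import reals.
From mathcomp Require Import ring lra zify.
Set Implicit Arguments. Unset Strict Implicit. Unset Printing Implicit Defensive.
Import Order.TTheory GRing.Theory Num.Theory.

(* Index the round-s colour classes by numbers c and encode a class as base^c, with base > |V|.
   Then sum_w base^(colour of phi_j(u,w)) has the multiplicities of the colours among the
   phi_j(u,w) as its base-digits, and weighting the j-th sum by (base^M)^(j+1), M the number of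
   colours, stacks these numbers, together with the code of u itself, as digits in base base^M.
   So the FFN input at round s is a natural number that determines the round-s colour, and the FFN
   only has to interpolate a function on finitely many reals, which a one-hidden-layer ReLU
   network does as a sum of steep hat functions. *)

Definition digits (B n : nat) (x : 'I_n -> nat) : nat := \sum_(i < n) B ^ i * x i.

Lemma digitsS B n (x : 'I_n.+1 -> nat) :
  digits B x = x ord0 + B * digits B (fun i => x (lift ord0 i)).
Proof.
rewrite /digits big_ord_recl expn0 mul1n big_distrr /=; congr (_ + _).
by apply: eq_bigr => i _; rewrite expnS mulnA.
Qed.

Lemma digit_shift_inj B x0 y0 X Y : x0 < B -> y0 < B ->
  x0 + B * X = y0 + B * Y -> x0 = y0 /\ X = Y.
Proof.
move=> x0B y0B E; have B0 : 0 < B by case: B x0B {y0B E}.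
have E0 : x0 = y0.
  by have := congr1 (modn^~ B) E; rewrite ![_ + B * _]addnC ![B * _]mulnC !modnMDl !modn_small.
by split=> //; move: E; rewrite E0 => /addnI /eqP; rewrite eqn_mul2l gtn_eqF // => /eqP.
Qed.

Lemma digits_lt B n (x : 'I_n -> nat) : (forall i, x i < B) -> digits B x < B ^ n.
Proof.
elim: n x => [|n IH] x xB; first by rewrite /digits big_ord0.
rewrite digitsS expnS; have := IH _ (fun i => xB (lift ord0 i)).
move: (digits _ _) (xB ord0) => D; nia.
Qed.

Lemma digits_inj B n (x y : 'I_n -> nat) : (forall i, x i < B) -> (forall i, y i < B) ->
  digits B x = digits B y -> x =1 y.
Proof.
elim: n x y => [|n IH] x y xB yB; first by move=> _ [].
rewrite !digitsS => /(digit_shift_inj (xB ord0) (yB ord0))[E0 E] i.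
have {}E := IH _ _ (fun i => xB _) (fun i => yB _) E.
by case: (unliftP ord0 i) => [j ->|->].
Qed.

Section ClassIndex.
Variables (T : finType) (e : rel T).

Definition class_index (x : T) : 'I_#|{set T}| := enum_rank [set y | e x y].

Lemma class_index_eq : equivalence_rel e ->
  forall x y, (class_index x == class_index y) = e x y.
Proof.
case/equivalence_relP => e_refl e_ltrans x y.
rewrite (inj_eq enum_rank_inj); apply/eqP/idP => [Exy | exy].
  by have := e_refl y; rewrite -in_set -Exy inE.
by apply/setP => z; rewrite !inE (e_ltrans _ _ exy).
Qed.
End ClassIndex.

Section WLEncoding.
Variables (V : finType) (L : eqType) (adj : rel V) (lab : V -> L) (k : nat).
Local Notation T := (ktuple V k).
Local Notation kwl := (@kwl_eq V L adj lab k).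

Lemma kwl_eq_refl s : reflexive (kwl s).
Proof.
elim: s => [|s IH] u /=; last by rewrite IH; apply/forallP => j; apply/forallP => x.
by apply/andP; split; apply/forallP => i; rewrite ?eqxx //; apply/forallP => j; rewrite !eqxx.
Qed.

Lemma kwl_eq_ltrans s : left_transitive (kwl s).
Proof.
elim: s => [|s IH] u v /=.
  case/andP => /forallP Euv /forallP Elab z; congr andb; apply: eq_forallb => i.
    by apply: eq_forallb => j; have /andP[/eqP -> /eqP ->] := forallP (Euv i) j.
  by rewrite (eqP (Elab i)).
case/andP => /IH Euv /forallP Ecnt z; rewrite Euv; congr andb.
by apply: eq_forallb => j; apply: eq_forallb => x; rewrite (eqP (forallP (Ecnt j) x)).
Qed.

Lemma kwl_eq_equiv s : equivalence_rel (kwl s).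
Proof. by apply/equivalence_relP; split; [apply: kwl_eq_refl | apply: kwl_eq_ltrans]. Qed.

Definition ncolours := #|{set T}|.

Definition colour s : T -> 'I_#|{set T}| := class_index (kwl s).

Lemma colour_eq s u v : (colour s u == colour s v) = kwl s u v.
Proof. exact: class_index_eq (kwl_eq_equiv s) u v. Qed.

(* [base > #|V|] bounds every multiplicity; the extra 1 gives [base >= 2] even for empty V. *)
Definition base := #|V|.+2.

Definition colour_code s u : nat := base ^ colour s u.
Definition nbr_code s u (j : 'I_k) : nat := \sum_(w : V) colour_code s (phi j u w).
Definition wl_code s u : nat :=
  colour_code s u + \sum_(j < k) (base ^ ncolours) ^ j.+1 * nbr_code s u j.

Lemma colour_code_eq s u v : (colour_code s u == colour_code s v) = kwl s u v.
Proof. by rewrite eqn_exp2l // -colour_eq. Qed.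

Lemma colour_code_lt s u : colour_code s u < base ^ ncolours.
Proof. by rewrite ltn_exp2l. Qed.

Lemma nbr_codeE s u j :
  nbr_code s u j = digits base (fun c => #|[set w | colour s (phi j u w) == c]|).
Proof.
rewrite /nbr_code (partition_big (fun w => colour s (phi j u w)) predT) //=.
apply: eq_bigr => c _; rewrite (eq_bigr (fun _ => base ^ c)) => [|w /eqP <- //].
by rewrite sum_nat_cond_const mulnC cardsE.
Qed.

Lemma card_lt_base (A : {set V}) : #|A| < base.
Proof. by rewrite ltnS leqW // max_card. Qed.

Lemma nbr_code_lt s u j : nbr_code s u j < base ^ ncolours.
Proof. by rewrite nbr_codeE; apply: digits_lt => c; apply: card_lt_base. Qed.

Lemma wl_codeE s u :
  wl_code s u = colour_code s u + base ^ ncolours * digits (base ^ ncolours) (nbr_code s u).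
Proof.
rewrite /wl_code /digits big_distrr; congr (_ + _).
by apply: eq_bigr => j _; rewrite /= expnS mulnA.
Qed.

Lemma wl_code_inj s u v : wl_code s u = wl_code s v -> kwl s.+1 u v.
Proof.
rewrite !wl_codeE => /(digit_shift_inj (colour_code_lt s u) (colour_code_lt s v)).
case=> /eqP Ecol Enbr.
have {}Enbr := digits_inj (nbr_code_lt s u) (nbr_code_lt s v) Enbr.
rewrite /= -colour_code_eq Ecol; apply/forallP => j; apply/forallP => x.
have Ecnt c : #|[set w | colour s (phi j u w) == c]| = #|[set w | colour s (phi j v w) == c]|.
  by have := Enbr j; rewrite !nbr_codeE => /digits_inj; apply=> // ?; apply: card_lt_base.
have Ekwl y : [set w | kwl s (phi j y w) x] = [set w | colour s (phi j y w) == colour s x].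
  by apply/setP => w; rewrite !inE colour_eq.
by rewrite !Ekwl Ecnt.
Qed.
End WLEncoding.

Local Open Scope ring_scope.

Section ReluInterpolation.
Variable R : realType.

Definition relu (a : R) : R := Num.max a 0.

Definition hat (z : R) : R := relu (z + 1) - 2 * relu z + relu (z - 1).

Lemma hat0 : hat 0 = 1.
Proof. by rewrite /hat /relu add0r sub0r maxxx max_l ?ler01 // max_r ?lerN10 //; lra. Qed.

Lemma hat_out z : 1 <= `|z| -> hat z = 0.
Proof.
rewrite /hat /relu; case: (lerP 0 z) => [z0|z0].
  by rewrite ger0_norm // => z1; rewrite !max_l; lra.
by rewrite ltr0_norm // => z1; rewrite !max_r; lra.
Qed.

Definition relu_sum_ffn (I : finType) (w b c : I -> R) : FFN R :=
  mlp_layer (\matrix_(p < #|I|, _ < 1) w (enum_val p)) (\col_p b (enum_val p))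
    (mlp_affine (\matrix_(_ < 1, p < #|I|) c (enum_val p)) 0).

Lemma relu_sum_ffnE (I : finType) (w b c : I -> R) x :
  ffn_eval (relu_sum_ffn w b c) x = \sum_i c i * relu (w i * x + b i).
Proof.
rewrite /ffn_eval /= mul_mx_scalar !mxE addr0 [RHS](reindex (fun p : 'I_#|I| => enum_val p)) /=.
  by apply: eq_bigr => p _; rewrite !mxE [x * _]mulrC.
by apply: onW_bij; exists enum_rank => ?; [apply: enum_valK | apply: enum_rankK].
Qed.

Section HatSum.
Variables (T : finType) (K : R) (a c : T -> R).

Definition hat_sum_ffn : FFN R :=
  relu_sum_ffn (fun _ : T * 'I_3 => K) (fun p => 1 - (p.2 : nat)%:R - K * a p.1)
    (fun p => (if p.2 == 1 :> nat then -2 else 1) * c p.1).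

Lemma hat_sum_ffnE x : ffn_eval hat_sum_ffn x = \sum_t c t * hat (K * (x - a t)).
Proof.
rewrite relu_sum_ffnE -(pair_big predT predT (fun t (q : 'I_3) =>
  (if q == 1 :> nat then -2 else 1) * c t * relu (K * x + (1 - q%:R - K * a t)))) /=.
apply: eq_bigr => t _; rewrite !big_ord_recl big_ord0 /hat /=.
have E (q : nat) : K * x + (1 - q%:R - K * a t) = K * (x - a t) + 1 - q%:R by ring.
rewrite !E subr0 addrK.
have -> : K * (x - a t) + 1 - (bump 0 (bump 0 0))%:R = K * (x - a t) - 1 by rewrite /bump /=; ring.
ring.
Qed.
End HatSum.

Section Interpolation.
Variables (T : finType) (a y : T -> R).

(* Pairs with [a t1 = a t2] contribute [0^-1 = 0]; the others force hats centred at distinct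
   values to have disjoint supports. *)
Definition steepness : R := \sum_t1 \sum_t2 `|a t1 - a t2|^-1.

Lemma steepness_ge t1 t2 : `|a t1 - a t2|^-1 <= steepness.
Proof.
have nneg t t' : 0 <= `|a t - a t'|^-1 by rewrite invr_ge0.
rewrite /steepness (bigD1 t1) //= (bigD1 t2) //= -addrA lerDl.
by rewrite addr_ge0 ?sumr_ge0 // => t _; rewrite sumr_ge0.
Qed.

Lemma steepness_ge0 : 0 <= steepness.
Proof. by rewrite sumr_ge0 // => t _; rewrite sumr_ge0 // => t' _; rewrite invr_ge0. Qed.

Definition multiplicity t : nat := #|[set t' | a t' == a t]|.

Definition interpolation_ffn : FFN R :=
  hat_sum_ffn steepness a (fun t => y t / (multiplicity t)%:R).

Hypothesis consistent : forall u v, a u = a v -> y u = y v.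

Lemma interpolation_ffnE u : ffn_eval interpolation_ffn (a u) = y u.
Proof.
have hat_indicator t : hat (steepness * (a u - a t)) = (a t == a u)%:R.
  case: eqP => [->|neq]; first by rewrite subrr mulr0 hat0.
  apply: hat_out; rewrite normrM ger0_norm ?steepness_ge0 //.
  have nz : `|a u - a t| != 0 by rewrite normr_eq0 subr_eq0 eq_sym; apply/eqP.
  by rewrite -(mulVf nz) ler_wpM2r // steepness_ge.
rewrite hat_sum_ffnE (eq_bigr (fun t => if a t == a u then y u / (multiplicity u)%:R else 0)).
  rewrite -big_mkcond sumr_const -[#|_|]cardsE -/(multiplicity u) -(mulr_natr (y u / _)) divfK //.
  by rewrite pnatr_eq0 -lt0n; apply/card_gt0P; exists u; rewrite inE.
move=> t _; rewrite hat_indicator; case: eqP => [Eau|_]; last by rewrite mulr0.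
by rewrite mulr1 (consistent Eau) /multiplicity Eau.
Qed.
End Interpolation.
End ReluInterpolation.

Theorem propositionI2 (R : realType) (V : finType) (L : eqType)
  (adj : rel V) (adj_sym : symmetric adj) (adj_irr : irreflexive adj)
  (lab : V -> L) (k : nat) (hk : (2 <= k)%N) (t : nat) (ht : (1 <= t)%N) :
  exists (g : nat -> ktuple V k -> R) (beta : 'I_k -> R) (ffn : nat -> FFN R),
    (forall u v, g 0%N u = g 0%N v <-> kwl_eq adj lab 0 u v) /\
    (forall s, (1 <= s <= t)%N -> forall u,
        g s u = ffn_eval (ffn s)
          (g s.-1 u + \sum_(j < k) beta j * \sum_(w : V) g s.-1 (phi j u w))) /\
    (forall u v, kwl_eq adj lab t u v <-> g t u = g t v).
Proof.
pose g s (u : ktuple V k) : R := (colour_code adj lab s u)%:R.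
pose input s (u : ktuple V k) : R := (wl_code adj lab s u)%:R.
have g_eq s u v : g s u = g s v <-> kwl_eq adj lab s u v.
  by rewrite -colour_code_eq -(eqr_nat R); split => /eqP.
have consistent s u v : input s u = input s v -> g s.+1 u = g s.+1 v.
  by move/eqP; rewrite eqr_nat => /eqP /wl_code_inj /g_eq.
exists g, (fun j => ((base V ^ ncolours V k) ^ j.+1)%:R),
  (fun s => interpolation_ffn (input s.-1) (g s)).
split; [exact: g_eq | split=> [s /andP[s_gt0 _] u | u v]; last by rewrite g_eq].
have consistent_s u' v' : input s.-1 u' = input s.-1 v' -> g s u' = g s v'.
  by move/consistent; rewrite prednK.
rewrite -(interpolation_ffnE consistent_s u) /input /wl_code natrD natr_sum.
by congr (ffn_eval _ (_ + _)); apply: eq_bigr => j _; rewrite natrM natr_sum.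
Qed.
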